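(* Let $1\le p\le\infty$, let $X,Y$ be real Banach spaces, let $U\subseteq X$ be an open convex subset, and let $f:U\to Y$ be a (Fréchet) differentiable mapping such that for every $U$-bounded Dunford-Pettis set $K\subset U$, the set $f'(K)$ is a $p$-$(DPL)$ set in $L(X,Y)$. Then $f$ is $p$-Right sequentially continuous.
   Context: A subset $B\subset U$ is $U$-bounded if it is bounded and its distance to the boundary of $U$ is strictly positive; a sequence is $U$-bounded if its set of terms is. A sequence $(x_n)$ in $X$ is weakly $p$-summable if $(x^*(x_n))_n\in\ell_p$ for every $x^*\in X^*$ (for $p=\infty$: weakly null). A sequence $(x_n)$ is weakly $p$-Cauchy if $(x_{m_k}-x_{n_k})_k$ is weakly $p$-summable for all strictly increasing index sequences $(m_k),(n_k)$. A bounded set $K\subset X$ is a Dunford-Pettis set if every weakly null sequence in $X^*$ converges to $0$ uniformly on $K$. A $p$-Right null (resp. $p$-Right Cauchy) sequence is a weakly $p$-summable (resp. weakly $p$-Cauchy) sequence whose set of terms is a Dunford-Pettis set. A set $K\subset L(X,Y)$ is a $p$-$(DPL)$ set if $\lim_n\sup_{T\in K}\|T(x_n)\|=0$ for every $p$-Right null sequence $(x_n)$ in $X$. A mapping $f:U\to Y$ is $p$-Right sequentially continuous if it takes $p$-Right Cauchy $U$-bounded sequences of $U$ into norm convergent sequences in $Y$. *)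

From HB Require Import structures.
From mathcomp Require Import all_boot all_order all_algebra.
From mathcomp Require Import all_classical all_reals all_analysis.
Set Implicit Arguments. Unset Strict Implicit. Unset Printing Implicit Defensive.
Import Order.TTheory GRing.Theory Num.Theory.
Import numFieldNormedType.Exports.
Local Open Scope classical_set_scope.
Local Open Scope ring_scope.

Section Defs.
Context {R : realType}.

Definition is_dual {X : normedModType R} (x' : X -> R) : Prop :=
  (forall (a : R) (u v : X), x' (a *: u + v) = a * x' u + x' v) /\ continuous x'.

Definition dual_norm {X : normedModType R} (x' : X -> R) : R :=
  sup [set `|x' x| | x in [set x : X | `|x| <= 1]].

(* phi is an element of X^** : a bounded linear functional on X^*
   (only its values on X^* matter). *)
Definition is_bidual {X : normedModType R} (phi : (X -> R) -> R) : Prop :=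
  (forall (a : R) (x' y' : X -> R), is_dual x' -> is_dual y' ->
      phi (fun x => a * x' x + y' x) = a * phi x' + phi y') /\
  exists C : R, forall x' : X -> R, is_dual x' -> `|phi x'| <= C * dual_norm x'.

Definition dual_weakly_null {X : normedModType R} (xs : nat -> X -> R) : Prop :=
  (forall n, is_dual (xs n)) /\
  forall phi : (X -> R) -> R, is_bidual phi -> (fun n => phi (xs n)) @ \oo --> (0 : R).

Definition weakly_psummable {X : normedModType R} (p : \bar R) (x : nat -> X) : Prop :=
  forall x' : X -> R, is_dual x' ->
    match p with
    | r%:E => cvg (series (fun n => `|x' (x n)| `^ r) @ \oo)
    | +oo%E => (fun n => x' (x n)) @ \oo --> (0 : R)
    | -oo%E => False
    end.

Definition weakly_pCauchy {X : normedModType R} (p : \bar R) (x : nat -> X) : Prop :=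
  forall m n : nat -> nat, {homo m : i j / (i < j)%N} -> {homo n : i j / (i < j)%N} ->
    weakly_psummable p (fun k => x (m k) - x (n k)).

Definition DP_set {X : normedModType R} (K : set X) : Prop :=
  bounded_set K /\
  forall xs : nat -> X -> R, dual_weakly_null xs ->
    forall eps : R, 0 < eps -> \forall n \near \oo, forall x, K x -> `|xs n x| <= eps.

Definition pRight_null {X : normedModType R} (p : \bar R) (x : nat -> X) : Prop :=
  weakly_psummable p x /\ DP_set (range x).

Definition pRight_Cauchy {X : normedModType R} (p : \bar R) (x : nat -> X) : Prop :=
  weakly_pCauchy p x /\ DP_set (range x).

Definition pDPL_set {X Y : normedModType R} (p : \bar R) (S : set (X -> Y)) : Prop :=
  forall x : nat -> X, pRight_null p x ->
    forall eps : R, 0 < eps -> \forall n \near \oo, forall T, S T -> `|T (x n)| <= eps.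

(* B is U-bounded: B is a bounded subset of U whose distance to the
   boundary of U is strictly positive (vacuous if the boundary is empty). *)
Definition U_bounded {X : normedModType R} (U B : set X) : Prop :=
  B `<=` U /\ bounded_set B /\
  exists r : R, 0 < r /\
    forall b z, B b -> (closure U `\` interior U) z -> r <= `|b - z|.

Definition pRight_seq_continuous {X Y : normedModType R} (p : \bar R) (U : set X)
    (f : X -> Y) : Prop :=
  forall x : nat -> X, pRight_Cauchy p x -> U_bounded U (range x) ->
    cvg ((f \o x) @ \oo).

End Defs.

From HB Require Import structures.
From mathcomp Require Import all_boot all_order all_algebra.
From mathcomp Require Import all_classical all_reals all_analysis.
From mathcomp Require Import lra.
Import Order.TTheory GRing.Theory Num.Theory.
Import numFieldNormedType.Exports.
Local Open Scope classical_set_scope.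
Local Open Scope ring_scope.

Set Implicit Arguments. Unset Strict Implicit. Unset Printing Implicit Defensive.

(* If (f (x_n)) were not Cauchy, there would be eps > 0 and increasing (m_k), (n_k)
   with |f (x_(m_k)) - f (x_(n_k))| >= eps.  The union K of all segments between
   points of the sequence is again U-bounded (U is convex) and Dunford-Pettis, and
   the differences x_(m_k) - x_(n_k) form a p-Right null sequence.  Since f'(K) is a
   p-(DPL) set, sup_(z in K) |f'(z) (x_(m_k) - x_(n_k))| <= eps / 2 for large k, and
   the mean value inequality on [x_(n_k), x_(m_k)] gives a contradiction. *)

Lemma increasing_pairs (P : nat -> nat -> Prop) :
  (forall N, exists2 k, (N <= k)%N & P N k) ->
  exists m n : nat -> nat, [/\ {homo m : i j / (i < j)%N},
    {homo n : i j / (i < j)%N} & forall k, P (m k) (n k)].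
Proof.
move=> hP; have /choice[J hJ] : forall N, exists k, (N <= k)%N /\ P N k.
  by move=> N; have [k] := hP N; exists k.
pose m k := iter k (fun i => (J i).+1) 0%N.
have m_lt_Jm k : (m k < m k.+1)%N by rewrite /= ltnS (hJ _).1.
exists m, (J \o m); split => [||k]; last exact: (hJ _).2.
- exact: (homo_ltn ltn_trans).
- apply: (homo_ltn ltn_trans) => k /=.
  by apply: leq_trans (hJ _).1; rewrite ltnS.
Qed.

Section RealAnalysis.
Context {R : realType}.

Lemma not_cvg_separated (Y : completeNormedModType R) (y : nat -> Y) :
  ~ cvg (y @ \oo) ->
  exists2 eps : R, 0 < eps & exists m n : nat -> nat,
    [/\ {homo m : i j / (i < j)%N}, {homo n : i j / (i < j)%N} &
        forall k, eps <= `|y (m k) - y (n k)|].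
Proof.
move=> ncvg.
have [eps e0 far] : exists2 eps : R, 0 < eps &
    forall N, exists2 k, (N <= k)%N & eps <= `|y N - y k|.
  apply: contrapT => nsep; apply: ncvg; apply/cauchy_cvgP; apply/cauchyP => eps e0.
  have [N near_yN] : exists N, forall k, (N <= k)%N -> `|y N - y k| < eps.
    apply: contrapT => nN; apply: nsep; exists eps => // N.
    apply: contrapT => nk; apply: nN; exists N => k Nk.
    by rewrite ltNge; apply/negP => ?; apply: nk; exists k.
  by exists (y N); exists N => // k /= Nk; rewrite -ball_normE; apply: near_yN.
by exists eps => //; apply: (increasing_pairs (P := fun i j => eps <= `|y i - y j|)).
Qed.

Lemma unit_interval_induction (S : set R) :
  (forall s, 0 <= s <= 1 -> (forall u, 0 <= u < s -> S u) -> S s) ->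
  (forall s, 0 <= s < 1 -> S s ->
     exists2 d, 0 < d & forall u, s <= u < s + d -> S u) ->
  S 1.
Proof.
move=> from_left to_right.
pose A := [set t | 0 <= t <= 1 /\ forall u, 0 <= u <= t -> S u].
have A0 : A 0.
  split=> [|u /andP[u0 u0']]; first by rewrite lexx ler01.
  have -> : u = 0 by apply/le_anti/andP.
  apply: from_left => [|v /andP[v0 v0']]; first by rewrite lexx ler01.
  by move: (le_lt_trans v0 v0'); rewrite ltxx.
have supA : has_sup A by split; [exists 0 | exists 1 => t [/andP[]]].
set s := sup A.
have s0 : 0 <= s by apply: sup_upper_bound.
have s1 : s <= 1 by apply: ge_sup; [exists 0 | move=> t [/andP[]]].
have below u : 0 <= u < s -> S u.
  move=> /andP[u0 us].
  have [t [_ At]] := sup_adherent (eqbRL (subr_gt0 _ _) us) supA.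
  rewrite opprB addrCA subrr addr0 => ut.
  by apply: At; rewrite u0 ltW.
have Ss : S s by apply: from_left; rewrite ?s0.
have [s_lt1|s_ge1] := ltP s 1; last by rewrite -(@le_anti _ _ s 1) ?s1 ?s_ge1.
have [d d0 Sd] := to_right s (introT andP (conj s0 s_lt1)) Ss.
pose t := Num.min (s + d / 2) 1.
have st : s < t by rewrite lt_min s_lt1 andbT ltrDl divr_gt0.
have At : A t.
  split=> [|u /andP[u0 ut]]; first by rewrite (ltW (le_lt_trans s0 st)) ge_min lexx orbT.
  have [us|su] := ltP u s; first by apply: below; rewrite u0.
  apply: Sd; rewrite su (le_lt_trans ut) // gt_min ltrD2l.
  by rewrite ltr_pdivrMr // ltr_pMr // ltr1n.
by move: (sup_upper_bound supA At); rewrite leNgt st.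
Qed.

Lemma local_lipschitz_increment_le (Y : normedModType R) (g : R -> Y) (M : R) :
  (forall s, 0 <= s <= 1 -> exists2 d, 0 < d &
     forall u, `|u - s| < d -> `|g u - g s| <= M * `|u - s|) ->
  `|g 1 - g 0| <= M.
Proof.
move=> lip; rewrite -[M]mulr1.
apply: (unit_interval_induction (S := fun t => `|g t - g 0| <= M * t)).
- move=> s s01 IH; have [d d0 lip_s] := lip s s01; case/andP: s01 => s0 _.
  have [->|s_neq0] := eqVneq s 0; first by rewrite subrr normr0 mulr0.
  have {s_neq0}s_gt0 : 0 < s by rewrite lt_neqAle eq_sym s_neq0.
  pose u := Num.max 0 (s - d / 2).
  have u0 : 0 <= u by rewrite le_max lexx.
  have us : u < s by rewrite gt_max s_gt0 gtrBl divr_gt0.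
  have su : `|u - s| = s - u by rewrite distrC ger0_norm // subr_ge0 ltW.
  have usd : `|u - s| < d.
    have : s - d / 2 <= u by rewrite le_max lexx orbT.
    rewrite su; lra.
  have := lip_s u usd; rewrite su distrC => lip_u.
  rewrite -[g s](subrK (g u)) -addrA (le_trans (ler_normD _ _)) //.
  rewrite -[M * s](subrK (M * u)) -mulrBr lerD //.
  by apply: IH; rewrite u0.
- move=> s /andP[s0 s1] IH.
  have [d d0 lip_s] := lip s (introT andP (conj s0 (ltW s1))).
  exists d => // u /andP[su usd].
  have us : `|u - s| = u - s by rewrite ger0_norm // subr_ge0.
  have := lip_s u; rewrite us ltrBlDl => /(_ usd) lip_u.
  rewrite -[g u](subrK (g s)) -addrA (le_trans (ler_normD _ _)) //.
  by rewrite -[M * u](subrK (M * s)) -mulrBr lerD.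
Qed.

Lemma differentiable_approx (X Y : normedModType R) (f : X -> Y) (c : X) (e : R) :
  differentiable f c -> 0 < e ->
  exists2 del, 0 < del & forall h, `|h| < del ->
    `|f (c + h) - f c - 'd f c h| <= e * `|h|.
Proof.
move=> /diff_locally /eqaddoP /[apply] /nbhs_norm0P[del del0 approx].
by exists del => // h /approx; rewrite !fctE /= [h + c]addrC opprD addrA.
Qed.

Lemma segment_mean_value_le (X Y : normedModType R) (f : X -> Y) (a v : X) (B : R) :
  (forall t, 0 <= t <= 1 -> differentiable f (a + t *: v)) ->
  (forall t, 0 <= t <= 1 -> `|'d f (a + t *: v) v| <= B) ->
  `|f (a + v) - f a| <= B.
Proof.
move=> df dB; apply/ler_addgt0Pr => e e0.
have v1_gt0 : 0 < `|v| + 1 by apply: ltr_wpDl.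
pose e' := e / (`|v| + 1).
have e'0 : 0 < e' by apply: divr_gt0.
have e'v : e' * `|v| <= e by rewrite mulrAC ler_pdivrMr // ler_pM2l // lerDl.
suff : `|f (a + v) - f a| <= B + e' * `|v| by move/le_trans; apply; rewrite lerD2l.
have := @local_lipschitz_increment_le Y (fun t => f (a + t *: v)) (B + e' * `|v|).
rewrite /= scale1r scale0r addr0; apply=> s s01.
have [del del0 approx] := differentiable_approx (df s s01) e'0.
exists (del / (`|v| + 1)); first exact: divr_gt0.
move=> u us; set c := a + s *: v.
have -> : a + u *: v = c + (u - s) *: v by rewrite /c -addrA -scalerDl [s + _]addrC subrK.
have small : `|(u - s) *: v| < del.
  rewrite normrZ (le_lt_trans (y := `|u - s| * (`|v| + 1))) -?ltr_pdivlMr //.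
  by rewrite ler_wpM2l // lerDl.
have := approx _ small; rewrite linearZ /= normrZ.
set D := 'd f c v; set F := f (c + _) => approx_u.
rewrite -[F - f c](subrK ((u - s) *: D)) (le_trans (ler_normD _ _)) // normrZ.
have := dB s s01; rewrite -/c -/D => DB.
have := normr_ge0 (u - s); have := normr_ge0 v; nra.
Qed.
End RealAnalysis.

Section SegmentHull.
Context {R : realType} {X : normedModType R}.

Lemma dual_comb2 (x' : X -> R) (s t : R) (a b : X) : is_dual x' ->
  x' (s *: a + t *: b) = s * x' a + t * x' b.
Proof.
move=> [x'_lin _]; have x'0 : x' 0 = 0.
  by have := x'_lin 1 0 0; rewrite scale1r addr0 mul1r; lra.
by rewrite x'_lin; have := x'_lin t b 0; rewrite !addr0 x'0 addr0 => ->.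
Qed.

Definition balanced_sum (A : set X) : set X :=
  [set z | exists a b (s t : R),
     [/\ A a, A b, `|s| <= 1, `|t| <= 1 & z = s *: a + t *: b]].

Definition segment_hull (A : set X) : set X :=
  [set z | exists a b (t : R), [/\ A a, A b, 0 <= t <= 1 & z = a + t *: (b - a)]].

Lemma segment_hull_sub_balanced_sum (A : set X) :
  segment_hull A `<=` balanced_sum A.
Proof.
move=> _ [a [b [t [Aa Ab /andP[t0 t1] ->]]]].
exists a, b, (1 - t), t; split => //.
- by rewrite ger0_norm ?subr_ge0 // gerBl.
- by rewrite ger0_norm.
- by rewrite scalerBr scalerBl scale1r addrA addrAC.
Qed.

Lemma differences_sub_balanced_sum (A : set X) :
  [set a - b | a in A & b in A] `<=` balanced_sum A.
Proof.
move=> _ [a Aa [b Ab <-]]; exists a, b, 1, (-1).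
by rewrite normrN normr1 scale1r scaleN1r.
Qed.

Lemma bounded_set_sub (A B : set X) : B `<=` A -> bounded_set A -> bounded_set B.
Proof. by move=> BA; apply: sub_boundedr => P AP x /BA /AP. Qed.

Lemma bounded_balanced_sum (A : set X) :
  bounded_set A -> bounded_set (balanced_sum A).
Proof.
move=> /near_pinfty_div2; apply: filterS => M AM _ [a [b [s [t [Aa Ab s1 t1 ->]]]]].
have /= := AM a Aa; have /= := AM b Ab => bM aM.
rewrite (le_trans (ler_normD _ _)) // !normrZ.
have := normr_ge0 s; have := normr_ge0 t; have := normr_ge0 a; have := normr_ge0 b; nra.
Qed.

Lemma DP_set_sub (A B : set X) : B `<=` A -> DP_set A -> DP_set B.
Proof.
move=> BA [bdA DPA]; split=> [|xs xs_null eps e0]; first exact: bounded_set_sub bdA.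
by apply: filterS (DPA xs xs_null eps e0) => n An x /BA /An.
Qed.

Lemma DP_set_balanced_sum (A : set X) : DP_set A -> DP_set (balanced_sum A).
Proof.
move=> [bdA DPA]; split=> [|xs xs_null eps e0]; first exact: bounded_balanced_sum.
apply: filterS (DPA xs xs_null _ (divr_gt0 e0 (ltr0Sn _ 1))).
move=> n An _ [a [b [s [t [Aa Ab s1 t1 ->]]]]].
rewrite dual_comb2; last exact: xs_null.1.
rewrite (le_trans (ler_normD _ _)) // !normrM.
have := An a Aa; have := An b Ab.
have := normr_ge0 s; have := normr_ge0 t.
have := normr_ge0 (xs n a); have := normr_ge0 (xs n b); nra.
Qed.

Lemma convex_segment (U : set X) (a b : X) (t : R) :
  convex_set (U : set (convex_lmodType X)) -> U a -> U b -> 0 <= t <= 1 ->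
  U (a + t *: (b - a)).
Proof.
move=> cU Ua Ub /andP[t0 t1].
have := cU b a (Itv01 t0 t1); rewrite !inE => /(_ Ub Ua).
by rewrite /conv /= /unstable.onem scalerBl scale1r scalerBr addrCA.
Qed.

Lemma segment_hull_sub_convex (U A : set X) :
  convex_set (U : set (convex_lmodType X)) -> A `<=` U -> segment_hull A `<=` U.
Proof.
move=> cU AU _ [a [b [t [Aa Ab t01 ->]]]].
exact: convex_segment cU (AU _ Aa) (AU _ Ab) t01.
Qed.

(* The segment from a to y avoids the boundary of U, so it stays in U by
   connectedness of [0, 1]. *)
Lemma boundary_far_ball_sub (U : set X) (a : X) (r : R) :
  open U -> U a -> (forall z, (closure U `\` interior U) z -> r <= `|a - z|) ->
  ball a r `<=` U.
Proof.
move=> oU Ua far y; rewrite -ball_normE /= => ay.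
pose phi t := a + t *: (y - a).
have phi_cont : continuous phi.
  by move=> t; apply: cvgD; [exact: cvg_cst | exact: scalel_continuous].
have phi_near t : 0 <= t <= 1 -> `|a - phi t| < r.
  move=> /andP[t0 t1]; rewrite /phi opprD addrA subrr add0r normrN normrZ.
  by rewrite ger0_norm // distrC (le_lt_trans _ ay) // ler_piMl.
have seg : `[0, 1]%classic `&` phi @^-1` U = `[0, 1]%classic.
  apply: segment_connected.
  - by exists 0; split; rewrite /= ?in_itv /= ?lexx ?ler01 // /phi scale0r addr0.
  - by exists (phi @^-1` U) => //; apply: (continuousP _).1.
  exists (phi @^-1` closure U).
    by apply: preimage_closed => [t _|]; [exact: phi_cont | exact: closed_closure].
  rewrite eqEsubset; split=> t [t01 phit]; split=> //; first exact: subset_closure.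
  apply: contrapT => nU; move: t01; rewrite /= in_itv /= => /phi_near.
  by rewrite ltNge far //; split=> // /interior_subset.
have [_] : (`[0, 1]%classic `&` phi @^-1` U) 1.
  by rewrite seg /= in_itv /= lexx ler01.
by rewrite /phi /= scale1r addrC subrK.
Qed.

Lemma U_bounded_segment_hull (U A : set X) :
  open U -> convex_set (U : set (convex_lmodType X)) ->
  U_bounded U A -> U_bounded U (segment_hull A).
Proof.
move=> oU cU [AU [bdA [r [r0 far]]]]; split; first exact: segment_hull_sub_convex.
split.
  exact: bounded_set_sub (segment_hull_sub_balanced_sum (A := A))
    (bounded_balanced_sum bdA).
exists r; split=> // _ w [a [b [t [Aa Ab t01 ->]]]] [_ not_int_w].
rewrite leNgt; apply/negP => near_w; apply: not_int_w.
set z := a + t *: (b - a) in near_w *.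
have shift_in c : A c -> U (c + (w - z)).
  move=> Ac; apply: (boundary_far_ball_sub oU (AU _ Ac) (fun y => far c y Ac)).
  by rewrite -ball_normE /= opprD addrA subrr add0r normrN distrC.
have := convex_segment cU (shift_in a Aa) (shift_in b Ab) t01.
rewrite [a + _]addrC addrKA -addrA -/z subrK.
by move: oU; rewrite openE; apply.
Qed.
End SegmentHull.

Theorem theorem3p7 (R : realType) (p : \bar R) (X Y : completeNormedModType R)
  (U : set X) (f : X -> Y) :
  (1 <= p)%E ->
  open U ->
  convex_set (U : set (convex_lmodType X)) ->
  (forall x, U x -> differentiable f x) ->
  (forall K : set X, U_bounded U K -> DP_set K ->
     pDPL_set p [set ('d f x : X -> Y) | x in K]) ->
  pRight_seq_continuous p U f.
Proof.
move=> _ oU cU df dDPL x [x_Cauchy x_DP] x_Ub.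
apply: contrapT => /not_cvg_separated[eps e0 [m [n [m_incr n_incr sep]]]].
pose K := segment_hull (range x).
have K_Ub : U_bounded U K := U_bounded_segment_hull oU cU x_Ub.
have K_DP : DP_set K :=
  DP_set_sub (segment_hull_sub_balanced_sum (A := range x)) (DP_set_balanced_sum x_DP).
have dx_null : pRight_null p (fun k => x (m k) - x (n k)).
  split; first exact: x_Cauchy.
  apply: DP_set_sub (DP_set_balanced_sum x_DP) => _ [k _ <-].
  by apply: differences_sub_balanced_sum; exists (x (m k)); last exists (x (n k)).
have [k0 _ small] := dDPL K K_Ub K_DP _ dx_null _ (divr_gt0 e0 (ltr0Sn _ 1)).
have K_seg t : 0 <= t <= 1 -> K (x (n k0) + t *: (x (m k0) - x (n k0))).
  by move=> t01; exists (x (n k0)), (x (m k0)), t; split; rewrite ?t01.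
have : `|f (x (m k0)) - f (x (n k0))| <= eps / 2.
  rewrite -[x (m k0)](subrKC (x (n k0))).
  apply: segment_mean_value_le => t /K_seg Kt; first exact: df (K_Ub.1 _ Kt).
  by apply: small (leqnn k0) _ _; exists (x (n k0) + t *: (x (m k0) - x (n k0))).
by have := sep k0; lra.
Qed.
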